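(* Let $\mathbb{F}$ be any field. There exists a family $\{P_d\}$ of polynomials in $\mathsf{VNP}$, where $P_d$ has degree $d$ and is in $n = \mathrm{poly}(d)$ variables, such that any $\Sigma\Pi\Sigma$ circuit over $\mathbb{F}$ of formal degree $d$ which is functionally equivalent to $P_d$ over $\{0,1\}^n$ has size at least $\exp(\Omega(d\log n))$.
   Context: A $\Sigma\Pi\Sigma$ (depth-3) circuit over $\mathbb{F}$ computes an expression $\sum_{i=1}^{s}\prod_{j=1}^{d_i} L_{i,j}(\mathbf{x})$ where each $L_{i,j}$ is an affine form in the variables $x_1,\dots,x_n$; its formal degree is $\max_i d_i$, and its size is at least its top fan-in $s$. A circuit $C$ is functionally equivalent to a polynomial $P\in\mathbb{F}[x_1,\dots,x_n]$ over $\{0,1\}^n$ if $C(\mathbf{x})=P(\mathbf{x})$ for every $\mathbf{x}\in\{0,1\}^n$ (as opposed to $C\equiv P$ as formal polynomials). $\mathsf{VNP}$ denotes Valiant's class of families of polynomials that are explicit in the algebraic sense (families of the form $P_n(\mathbf{x})=\sum_{\mathbf{b}\in\{0,1\}^{m}} g_n(\mathbf{x},\mathbf{b})$ with $m=\mathrm{poly}(n)$ and $\{g_n\}$ computable by polynomial-size arithmetic circuits of polynomial degree). *)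

From HB Require Import structures.
From mathcomp Require Import all_boot all_order all_algebra.
From mathcomp Require Import mpoly.
Set Implicit Arguments. Unset Strict Implicit. Unset Printing Implicit Defensive.
Import Order.TTheory GRing.Theory.
Local Open Scope ring_scope.

(* Degree of a multivariate polynomial: total degree; deg 0 := 0.     *)
Definition mdegree (F : fieldType) (n : nat) (p : {mpoly F[n]}) : nat :=
  (msize p).-1.

Definition poly_bounded (f : nat -> nat) : Prop :=
  exists c : nat, forall d : nat, (f d <= c * d ^ c + c)%N.

(* General arithmetic circuits, as straight-line programs.  Gate k may
   refer to gates j < k; a reference to a not-yet-computed gate reads 0
   (harmless: it is the constant-0 gate). *)
Inductive gate (F : Type) (n : nat) : Type :=
| GVar of 'I_n
| GConst of F
| GAdd of nat & nat
| GMul of nat & nat.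

Definition gate_val (F : fieldType) (n : nat) (vals : seq {mpoly F[n]})
    (g : gate F n) : {mpoly F[n]} :=
  match g with
  | GVar i => 'X_i
  | GConst c => c%:MP
  | GAdd j k => nth 0 vals j + nth 0 vals k
  | GMul j k => nth 0 vals j * nth 0 vals k
  end.

Definition circuit_vals (F : fieldType) (n : nat) (C : seq (gate F n))
    : seq {mpoly F[n]} :=
  foldl (fun vals g => rcons vals (gate_val vals g)) [::] C.

Definition circuit_poly (F : fieldType) (n : nat) (C : seq (gate F n))
    : {mpoly F[n]} :=
  last 0 (circuit_vals C).

Definition circuit_size (F : Type) (n : nat) (C : seq (gate F n)) : nat :=
  size C.

(* Valiant's VNP, for a family indexed by d, with nv d variables:
   P_d(x) = sum_{b in {0,1}^(m d)} g_d(x, b), where m is polynomially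
   bounded and g_d (in nv d + m d variables) is computed by an arithmetic
   circuit of size poly(d) and has degree poly(d). *)
Definition bool_subst (F : fieldType) (n m : nat) (b : 'I_m -> bool)
    : (n + m).-tuple {mpoly F[n]} :=
  [tuple match split i with
         | inl j => 'X_j
         | inr j => ((b j)%:R : F)%:MP
         end | i < n + m].

Definition VNP_family (F : fieldType) (nv : nat -> nat)
    (P : forall d, {mpoly F[nv d]}) : Prop :=
  exists (m : nat -> nat) (g : forall d, {mpoly F[nv d + m d]}),
    [/\ poly_bounded m,
        (exists Cg : forall d, seq (gate F (nv d + m d)),
            poly_bounded (fun d => circuit_size (Cg d)) /\
            forall d, circuit_poly (Cg d) = g d),
        poly_bounded (fun d => mdegree (g d))
      & forall d, P d =
          \sum_(b : {ffun 'I_(m d) -> bool}) comp_mpoly (@bool_subst F (nv d) (m d) b) (g d)].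

(* Depth-3 (Sigma Pi Sigma) circuits over F in n variables.
   An affine form is (c0, c) : c0 + sum_i c_i x_i.
   A circuit is the list of its product gates, each a list of affine forms. *)
Definition affine_form (F : fieldType) (n : nat) : Type := (F * {ffun 'I_n -> F})%type.

Definition SPS (F : fieldType) (n : nat) : Type := seq (seq (affine_form F n)).

Definition affine_eval (F : fieldType) (n : nat) (L : affine_form F n)
    (x : 'I_n -> F) : F :=
  L.1 + \sum_(i < n) L.2 i * x i.

Definition SPS_eval (F : fieldType) (n : nat) (C : SPS F n) (x : 'I_n -> F) : F :=
  \sum_(T <- C) \prod_(L <- T) affine_eval L x.

Definition SPS_formal_degree (F : fieldType) (n : nat) (C : SPS F n) : nat :=
  \max_(T <- C) size T.

(* size = number of gates below the output: the s product gates plus the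
   sum_i d_i affine-form gates; in particular it is >= the top fan-in s. *)
Definition SPS_size (F : fieldType) (n : nat) (C : SPS F n) : nat :=
  (size C + \sum_(T <- C) size T)%N.

Definition func_equiv (F : fieldType) (n : nat) (C : SPS F n) (P : {mpoly F[n]}) : Prop :=
  forall x : 'I_n -> bool,
    SPS_eval C (fun i => (x i)%:R) = P.@[fun i => (x i)%:R].

From mathcomp Require Import all_boot all_algebra.
From mathcomp Require Import mpoly.
From mathcomp Require Import zify.
Set Implicit Arguments. Unset Strict Implicit. Unset Printing Implicit Defensive.
Import GRing.Theory.
Local Open Scope ring_scope.

(* Take k = d/2 blocks of m = 16(d+1) pairs of variables and
   P = z^(d mod 2) * prod_(i<k) sum_(j<m) x_ij y_ij, of degree exactly d.
   For p, q : [k] -> [m], let x(p,q) be the Boolean point with z = 1,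
   x_ij = [p i = j] and y_ij = [q i = j]; then P(x(p,q)) = [p = q], so the
   m^k x m^k matrix of these values is the identity.  An affine form at x(p,q)
   is a term depending only on p plus a term depending only on q, hence a
   product of at most d affine forms yields a matrix of rank at most 2^d, and a
   depth-3 circuit of top fan-in s one of rank at most s 2^d.  Thus
   s >= m^k / 2^d = n^Omega(d).  P has small circuits, hence lies in VNP. *)

Lemma mxrank_sum_seq (F : fieldType) (I : Type) (r c : nat) (s : seq I)
    (A : I -> 'M[F]_(r, c)) :
  (\rank (\sum_(i <- s) A i)%R <= \sum_(i <- s) \rank (A i))%N.
Proof.
elim: s => [|i s IH]; first by rewrite !big_nil mxrank0.
by rewrite !big_cons (leq_trans (mxrank_add _ _)) ?leq_add.
Qed.

(* Multiplying by a factor a_i + b_j is A |-> diag(a) A + A diag(b). *)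
Lemma mxrank_prod_separable (F : fieldType) (r c : nat)
    (W : seq (('I_r -> F) * ('I_c -> F))) :
  (\rank (\matrix_(i, j) \prod_(w <- W) (w.1 i + w.2 j))%R <= 2 ^ size W)%N.
Proof.
elim: W => [|w W IH].
  have -> : \matrix_(i < r, j < c) \prod_(w <- [::] : seq (_ * _)) (w.1 i + w.2 j) =
            const_mx 1 *m (const_mx 1 : 'M[F]_(1, c)).
    by apply/matrixP => i j; rewrite !mxE big_nil big_ord1 !mxE mulr1.
  exact: mulmx_max_rank.
set A := \matrix_(i, j) _ in IH.
have -> : \matrix_(i, j) \prod_(w' <- w :: W) (w'.1 i + w'.2 j) =
          diag_mx (\row_i w.1 i) *m A + A *m diag_mx (\row_j w.2 j).
  apply/matrixP => i j; rewrite mxE big_cons mulrDl mxE mul_diag_mx mul_mx_diag.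
  by rewrite !mxE [_ * w.2 j]mulrC.
apply: leq_trans (mxrank_add _ _) _.
rewrite expnS mul2n -addnn leq_add //.
  exact: leq_trans (mxrankM_maxr _ _) IH.
exact: leq_trans (mxrankM_maxl _ _) IH.
Qed.

Lemma eq_SPS_eval (F : fieldType) (n : nat) (C : SPS F n) (x y : 'I_n -> F) :
  x =1 y -> SPS_eval C x = SPS_eval C y.
Proof.
move=> xy; apply: eq_bigr => T _; apply: eq_bigr => L _.
by rewrite /affine_eval; congr (_ + _); apply: eq_bigr => i _; rewrite xy.
Qed.

Lemma mxrank_SPS_eval_separable (F : fieldType) (n r c : nat) (C : SPS F n)
    (a : 'I_r -> 'I_n -> F) (b : 'I_c -> 'I_n -> F) :
  (\rank (\matrix_(i, j) SPS_eval C (fun v => a i v + b j v))%R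
     <= size C * 2 ^ SPS_formal_degree C)%N.
Proof.
pose sep (L : affine_form F n) :=
  (fun i => affine_eval L (a i), fun j => \sum_(v < n) L.2 v * b j v).
have -> : \matrix_(i, j) SPS_eval C (fun v => a i v + b j v) =
          (\sum_(T <- C) \matrix_(i, j) \prod_(w <- map sep T) (w.1 i + w.2 j))%R.
  apply/matrixP => i j; rewrite !mxE summxE; apply: eq_bigr => T _.
  rewrite mxE big_map; apply: eq_bigr => L _.
  rewrite /affine_eval -addrA -big_split; congr (_ + _).
  by apply: eq_bigr => v _; rewrite mulrDr.
apply: leq_trans (mxrank_sum_seq _ _) _.
rewrite -sum1_size big_distrl /= !big_seq leq_sum // => T TC.
rewrite mul1n (leq_trans (mxrank_prod_separable _)) // size_map leq_pexp2l //.
exact: (leq_bigmax_seq (F := fun T : seq _ => size T) _ TC isT).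
Qed.

Lemma dhomog_prod_ord (R : comNzRingType) (n d k : nat) (f : 'I_k -> {mpoly R[n]}) :
  (forall i, f i \is d.-homog) -> \prod_(i < k) f i \is (d * k).-homog.
Proof.
elim: k f => [|k IH] f hf; first by rewrite big_ord0 muln0 dhomog1.
by rewrite big_ord_recr mulnS addnC dhomogM ?IH.
Qed.

Lemma dhomog_sum_ord (R : comNzRingType) (n d k : nat) (f : 'I_k -> {mpoly R[n]}) :
  (forall i, f i \is d.-homog) -> \sum_(i < k) f i \is d.-homog.
Proof. by move=> hf; elim/big_ind: _ => //; [exact: dhomog0 | exact: dhomogD]. Qed.

Lemma dhomogXU (R : comNzRingType) (n : nat) (i : 'I_n) :
  ('X_i : {mpoly R[n]}) \is 1.-homog.
Proof. by rewrite dhomogX; apply/eqP; apply: mdeg1. Qed.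

Lemma mdegree_dhomog (F : fieldType) (n d : nat) (p : {mpoly F[n]}) :
  p \is d.-homog -> p != 0 -> mdegree p = d.
Proof.
move=> hp p0; rewrite /mdegree (mpolySpred _ p0) /=.
exact: dhomog_uniq p0 (dhomog_msize hp) hp.
Qed.

Lemma mdegree_dhomog_le (F : fieldType) (n d : nat) (p : {mpoly F[n]}) :
  p \is d.-homog -> (mdegree p <= d)%N.
Proof.
by have [->|p0 hp] := eqVneq p 0; rewrite ?(mdegree_dhomog hp p0) // /mdegree msize0.
Qed.

Lemma comp_bool_subst_lshift (F : fieldType) (n m : nat) (b : 'I_m -> bool) (i : 'I_n) :
  comp_mpoly (@bool_subst F n m b) 'X_(lshift m i) = 'X_i.
Proof.
by rewrite comp_mpolyXU -tnth_nth tnth_mktuple -[lshift m i]/(unsplit (inl i)) unsplitK.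
Qed.

Section DotProductPolynomial.
Variables k m : nat.

Definition var_index : finType := option ('I_k * 'I_m + 'I_k * 'I_m).
Definition nvar : nat := #|var_index|.

Lemma nvarE : nvar = (k * m + k * m).+1.
Proof. by rewrite /nvar card_option card_sum card_prod !card_ord. Qed.

(* [None] is z, [Some (inl (i, j))] is x_ij and [Some (inr (i, j))] is y_ij. *)
Definition dotprod_poly (R : comNzRingType) (e : nat) (X : var_index -> R) : R :=
  X None ^+ e * \prod_(i < k) \sum_(j < m) X (Some (inl (i, j))) * X (Some (inr (i, j))).

Lemma eq_dotprod_poly (R : comNzRingType) e (X Y : var_index -> R) :
  X =1 Y -> dotprod_poly e X = dotprod_poly e Y.
Proof.
move=> XY; rewrite /dotprod_poly XY; congr (_ * _).
by apply: eq_bigr => i _; apply: eq_bigr => j _; rewrite !XY.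
Qed.

Lemma rmorph_dotprod_poly (R S : comNzRingType) (f : {rmorphism R -> S}) e X :
  f (dotprod_poly e X) = dotprod_poly e (f \o X).
Proof.
rewrite rmorphM rmorphXn rmorph_prod; congr (_ * _); apply: eq_bigr => i _.
by rewrite rmorph_sum; apply: eq_bigr => j _; rewrite rmorphM.
Qed.

Definition grid_point (p q : {ffun 'I_k -> 'I_m}) (v : var_index) : bool :=
  match v with
  | None => true
  | Some (inl (i, j)) => p i == j
  | Some (inr (i, j)) => q i == j
  end.

Lemma dotprod_poly_grid_point (R : comNzRingType) e p q :
  dotprod_poly e (fun v => (grid_point p q v)%:R : R) = (p == q)%:R.
Proof.
rewrite /dotprod_poly expr1n mul1r.
transitivity (\prod_(i < k) ((p i == q i)%:R : R)).
  apply: eq_bigr => i _; rewrite (bigD1 (p i)) //= big1 ?addr0 => [|j].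
    by rewrite eqxx mul1r eq_sym.
  by rewrite eq_sym => /negbTE->; rewrite mul0r.
have [->|pq] := eqVneq p q; first by rewrite big1 // => i _; rewrite eqxx.
have [i /negbTE piq] : exists i, p i != q i.
  apply/existsP; apply: contraNT pq => /existsPn pq.
  by apply/eqP/ffunP => i; apply/eqP/negbNE/pq.
by rewrite (bigD1 i) //= piq mul0r.
Qed.

Definition row_part (R : nzRingType) (p : {ffun 'I_k -> 'I_m}) (v : var_index) : R :=
  match v with
  | None => 1
  | Some (inl (i, j)) => (p i == j)%:R
  | Some (inr _) => 0
  end.

Definition col_part (R : nzRingType) (q : {ffun 'I_k -> 'I_m}) (v : var_index) : R :=
  if v is Some (inr (i, j)) then (q i == j)%:R else 0.

Lemma grid_point_split (R : nzRingType) p q v :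
  (grid_point p q v)%:R = row_part R p v + col_part R q v.
Proof. by case: v => [[[i j]|[i j]]|] /=; rewrite ?addr0 ?add0r. Qed.

Lemma SPS_dotprod_poly_lower_bound (F : fieldType) e (C : SPS F nvar) :
  func_equiv C (dotprod_poly e (fun v => 'X_(enum_rank v))) ->
  (m ^ k <= size C * 2 ^ SPS_formal_degree C)%N.
Proof.
move=> CP; pose T := {ffun 'I_k -> 'I_m}.
pose x (r c : 'I_#|T|) (v : 'I_nvar) := grid_point (enum_val r) (enum_val c) (enum_val v).
have -> : (m ^ k = \rank (\matrix_(r, c) SPS_eval C (fun v => (x r c v)%:R)))%N.
  suff -> : \matrix_(r, c) SPS_eval C (fun v => (x r c v)%:R) = 1%:M.
    by rewrite mxrank1 card_ffun !card_ord.
  apply/matrixP => r c; rewrite !mxE CP (rmorph_dotprod_poly (meval _)).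
  rewrite -(inj_eq enum_val_inj) -(dotprod_poly_grid_point _ e).
  by apply: eq_dotprod_poly => v /=; rewrite mevalXU /x enum_rankK.
have -> : \matrix_(r, c) SPS_eval C (fun v => (x r c v)%:R) =
          \matrix_(r, c) SPS_eval C (fun v => row_part F (enum_val r) (enum_val v)
                                             + col_part F (enum_val c) (enum_val v)).
  by apply/matrixP => r c; rewrite !mxE; apply: eq_SPS_eval => v; apply: grid_point_split.
exact: mxrank_SPS_eval_separable.
Qed.

Lemma dotprod_poly_dhomog (R : comNzRingType) (n e : nat) (f : var_index -> 'I_n) :
  dotprod_poly e (fun v => 'X_(f v) : {mpoly R[n]}) \is (e + 2 * k).-homog.
Proof.
apply: dhomogM; first by have := dhomogMn e (dhomogXU R (f None)); rewrite mul1n.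
apply: dhomog_prod_ord => i; apply: dhomog_sum_ord => j.
exact: (dhomogM (dhomogXU _ _) (dhomogXU _ _)).
Qed.

Lemma dotprod_poly_neq0 (F : fieldType) e : (0 < m)%N ->
  dotprod_poly e (fun v => 'X_(enum_rank v) : {mpoly F[nvar]}) != 0.
Proof.
move=> m0; pose p : {ffun 'I_k -> 'I_m} := [ffun _ => Ordinal m0].
have Pp : meval (fun i => (grid_point p p (enum_val i))%:R)
            (dotprod_poly e (fun v => 'X_(enum_rank v))) = (p == p)%:R :> F.
  rewrite rmorph_dotprod_poly -(dotprod_poly_grid_point _ e).
  by apply: eq_dotprod_poly => v /=; rewrite mevalXU enum_rankK.
apply/eqP => P0; move: Pp; rewrite P0 meval0 eqxx /= mulr1n => /eqP.
by rewrite eq_sym oner_eq0.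
Qed.

End DotProductPolynomial.
Section Circuits.
Variables (F : fieldType) (n : nat).
Local Notation gate := (gate F n).
Local Notation circuit_step := (fun vals g => rcons vals (@gate_val F n vals g)).

Definition shift_gate (s : nat) (g : gate) : gate :=
  match g with
  | GAdd j l => GAdd F n (j + s) (l + s)
  | GMul j l => GMul F n (j + s) (l + s)
  | _ => g
  end.

Lemma size_circuit_vals (C : seq gate) : size (circuit_vals C) = size C.
Proof.
suff gen : forall V : seq {mpoly F[n]},
    size (foldl circuit_step V C) = (size V + size C)%N by exact: gen [::].
by elim: C => [|g C IH] V /=; rewrite ?addn0 // IH size_rcons addSnnS.
Qed.

Lemma circuit_vals_cat_shift (C1 C2 : seq gate) :
  circuit_vals (C1 ++ map (shift_gate (size C1)) C2) = circuit_vals C1 ++ circuit_vals C2.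
Proof.
rewrite /circuit_vals foldl_cat -/(circuit_vals C1) -(size_circuit_vals C1).
set V1 := circuit_vals C1.
suff gen : forall W, foldl circuit_step (V1 ++ W) (map (shift_gate (size V1)) C2) =
                     V1 ++ foldl circuit_step W C2 by have := gen [::]; rewrite cats0.
elim: C2 => [|g C2 IH] W //=.
suff -> : gate_val (V1 ++ W) (shift_gate (size V1) g) = gate_val W g
  by rewrite rcons_cat IH.
have shiftK j : nth 0 (V1 ++ W) (j + size V1) = nth 0 W j.
  by rewrite nth_cat ltnNge leq_addl addnK.
by case: g => //= j l; rewrite !shiftK.
Qed.

(* After the shift, the outputs of C1 and C2 are gates (size C1).-1 and (size C1 + size C2).-1. *)
Definition circuit_bin (op : nat -> nat -> gate) (C1 C2 : seq gate) : seq gate :=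
  C1 ++ map (shift_gate (size C1)) C2 ++ [:: op (size C1).-1 (size C1 + size C2).-1].

Definition circuit_add := circuit_bin (GAdd F n).
Definition circuit_mul := circuit_bin (GMul F n).

Lemma size_circuit_bin op (C1 C2 : seq gate) :
  size (circuit_bin op C1 C2) = (size C1 + size C2).+1.
Proof. by rewrite /circuit_bin !size_cat size_map /= addn1 addnS. Qed.

Lemma nth_cat_last (V1 V2 : seq {mpoly F[n]}) :
  (0 < size V1)%N -> (0 < size V2)%N ->
  nth 0 (V1 ++ V2) (size V1).-1 = last 0 V1 /\
  nth 0 (V1 ++ V2) (size V1 + size V2).-1 = last 0 V2.
Proof.
case: V1 => // a V1 _; case: V2 => // b V2 _.
rewrite !nth_cat /= ltnS leqnn addnS ltnNge leq_addr subSS addKn.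
by split; [exact: (nth_last 0 (a :: V1)) | exact: (nth_last 0 (b :: V2))].
Qed.

Lemma circuit_poly_bin op (C1 C2 : seq gate) :
  circuit_poly (circuit_bin op C1 C2) =
  gate_val (circuit_vals C1 ++ circuit_vals C2) (op (size C1).-1 (size C1 + size C2).-1).
Proof.
rewrite /circuit_poly /circuit_bin catA /circuit_vals foldl_cat.
by rewrite -/(circuit_vals _) circuit_vals_cat_shift /= last_rcons.
Qed.

Lemma circuit_poly_add (C1 C2 : seq gate) : (0 < size C1)%N -> (0 < size C2)%N ->
  circuit_poly (circuit_add C1 C2) = circuit_poly C1 + circuit_poly C2.
Proof.
rewrite circuit_poly_bin -!(size_circuit_vals C1) -!(size_circuit_vals C2) => C1n C2n.
by have [/= -> ->] := nth_cat_last C1n C2n.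
Qed.

Lemma circuit_poly_mul (C1 C2 : seq gate) : (0 < size C1)%N -> (0 < size C2)%N ->
  circuit_poly (circuit_mul C1 C2) = circuit_poly C1 * circuit_poly C2.
Proof.
rewrite circuit_poly_bin -!(size_circuit_vals C1) -!(size_circuit_vals C2) => C1n C2n.
by have [/= -> ->] := nth_cat_last C1n C2n.
Qed.

Definition circuit_sum (s : seq (seq gate)) := foldr circuit_add [:: GConst n 0] s.
Definition circuit_prod (s : seq (seq gate)) := foldr circuit_mul [:: GConst n 1] s.

Lemma size_foldr_circuit_bin op (C0 : seq gate) (s : seq (seq gate)) :
  size (foldr (circuit_bin op) C0 s) = (\sum_(C <- s) (size C).+1 + size C0)%N.
Proof.
elim: s => [|C s IH] /=; first by rewrite big_nil.
by rewrite size_circuit_bin IH big_cons addnA addSn.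
Qed.

Lemma circuit_poly_sum (s : seq (seq gate)) : all (fun C => 0 < size C)%N s ->
  circuit_poly (circuit_sum s) = \sum_(C <- s) circuit_poly C.
Proof.
elim: s => [|C s IH] /=; first by rewrite big_nil.
case/andP => C0 s0; rewrite big_cons -IH // circuit_poly_add //.
by rewrite size_foldr_circuit_bin addn1.
Qed.

Lemma circuit_poly_prod (s : seq (seq gate)) : all (fun C => 0 < size C)%N s ->
  circuit_poly (circuit_prod s) = \prod_(C <- s) circuit_poly C.
Proof.
elim: s => [|C s IH] /=; first by rewrite big_nil.
case/andP => C0 s0; rewrite big_cons -IH // circuit_poly_mul //.
by rewrite size_foldr_circuit_bin addn1.
Qed.

End Circuits.

Definition dotprod_circuit (F : fieldType) (n k m e : nat) (f : var_index k m -> 'I_n)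
    : seq (gate F n) :=
  let var v := [:: GVar F (f v)] in
  circuit_mul (circuit_prod (nseq e (var None)))
    (circuit_prod [seq circuit_sum [seq circuit_mul (var (Some (inl (i, j))))
                                                    (var (Some (inr (i, j))))
                                   | j <- enum 'I_m]
                  | i <- enum 'I_k]).

Lemma size_dotprod_circuit (F : fieldType) (n k m e : nat) (f : var_index k m -> 'I_n) :
  size (dotprod_circuit F e f) = (e * 2 + k * (m * 4).+2 + 3)%N.
Proof.
rewrite size_circuit_bin !size_foldr_circuit_bin !big_map !big_nseq.
under eq_bigr do rewrite size_foldr_circuit_bin big_map.
under eq_bigr do under eq_bigr do rewrite size_circuit_bin.
rewrite /= !big_const_seq !count_predT -enumT !size_enum_ord !iter_addn_0; lia.
Qed.

Lemma circuit_poly_dotprod (F : fieldType) (n k m e : nat) (f : var_index k m -> 'I_n) :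
  circuit_poly (dotprod_circuit F e f) = dotprod_poly e (fun v => 'X_(f v)).
Proof.
have all_pos (T : Type) (s : seq T) (g : T -> seq (gate F n)) :
    (forall t, 0 < size (g t))%N -> all (fun C => 0 < size C)%N (map g s).
  by move=> g0; elim: s => //= t s ->; rewrite g0.
rewrite circuit_poly_mul ?size_foldr_circuit_bin ?addn1 //.
rewrite !circuit_poly_prod ?all_nseq ?orbT //; last first.
  by apply: all_pos => i; rewrite size_foldr_circuit_bin addn1.
rewrite big_nseq big_map big_enum /=; congr (_ * _).
  by elim: e => [|e /= ->]; rewrite ?expr0 ?exprS.
apply: eq_bigr => i _; rewrite circuit_poly_sum; last first.
  by apply: all_pos => j; rewrite size_circuit_bin.
by rewrite big_map big_enum; apply: eq_bigr => j _; rewrite circuit_poly_mul.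
Qed.

Lemma poly_bounded_quadratic (c : nat) (f : nat -> nat) :
  (forall d, f d <= c * d ^ 2 + c)%N -> poly_bounded f.
Proof.
move=> fc; exists c.+2 => d; apply: leq_trans (fc d) _.
apply: leq_add; last exact/leqW/leqnSn.
apply: leq_mul; first exact/leqW/leqnSn.
by case: d => [|d]; [rewrite !exp0n | rewrite leq_pexp2l].
Qed.

Lemma odd_add_mul2_half (d : nat) : (odd d + 2 * d./2)%N = d.
Proof. by rewrite mul2n odd_double_half. Qed.

Definition hard_nvar (d : nat) : nat := nvar d./2 (16 * d.+1).

Definition hard_poly (F : fieldType) (d : nat) : {mpoly F[hard_nvar d]} :=
  dotprod_poly (odd d) (fun v => 'X_(enum_rank v)).

Lemma mdegree_hard_poly (F : fieldType) (d : nat) : mdegree (hard_poly F d) = d.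
Proof.
rewrite (mdegree_dhomog (dotprod_poly_dhomog _ _ _)) ?odd_add_mul2_half //.
exact: dotprod_poly_neq0.
Qed.

(* With M = 16(d+1): n^d <= M^(2d), 2^(16d) <= M^(4d) and 6d <= 16 (d/2) once d >= 4. *)
Lemma hard_nvar_pow_le (d s : nat) :
  (4 <= d)%N -> ((16 * d.+1) ^ d./2 <= s * 2 ^ d)%N -> (hard_nvar d ^ d <= s ^ 16)%N.
Proof.
move=> d4 lb; set M := (16 * d.+1)%N in lb *; set K := d./2 in lb.
have dK := odd_add_mul2_half d; rewrite -/K in dK.
have nvM : (hard_nvar d <= M * M)%N by rewrite /hard_nvar nvarE -/K -/M; nia.
have lb16 : (M ^ (16 * K) <= s ^ 16 * 2 ^ (16 * d))%N.
  by rewrite mulnC expnM [(16 * d)%N]mulnC expnM -expnMn leq_exp2r.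
rewrite -(leq_pmul2r (expn_gt0 2 (16 * d))); apply: leq_trans lb16.
apply: (@leq_trans (M ^ (2 * d) * M ^ (4 * d))); last first.
  by rewrite -expnD leq_pexp2l //; lia.
rewrite leq_mul //; first by rewrite expnM leq_exp2r; [exact: nvM | lia].
by rewrite [(16 * d)%N](_ : _ = 4 * (4 * d))%N ?expnM ?leq_exp2r //; lia.
Qed.

(* No auxiliary Boolean variables are needed: g_d is P_d itself. *)
Lemma VNP_hard_poly (F : fieldType) : VNP_family (hard_poly F).
Proof.
pose f d (v : var_index d./2 (16 * d.+1)) := lshift 0 (enum_rank v).
exists (fun _ => 0%N), (fun d => dotprod_poly (odd d) (fun v => 'X_(f d v))); split.
- by exists 0%N.
- exists (fun d => dotprod_circuit F (odd d) (f d)); split => [|d]; last first.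
    exact: circuit_poly_dotprod.
  apply: (@poly_bounded_quadratic 100) => d.
  rewrite /circuit_size size_dotprod_circuit; have := odd_add_mul2_half d; nia.
- apply: (@poly_bounded_quadratic 1) => d.
  apply: leq_trans (mdegree_dhomog_le (dotprod_poly_dhomog _ _ _)) _.
  by rewrite odd_add_mul2_half; nia.
- move=> d; rewrite (eq_bigr (fun=> hard_poly F d)) => [|b _].
    by rewrite sumr_const card_ffun card_ord card_bool expn0.
  rewrite rmorph_dotprod_poly; apply: eq_dotprod_poly => v.
  exact: comp_bool_subst_lshift.
Qed.

Lemma hard_poly_SPS_lower_bound (F : fieldType) (d : nat) (C : SPS F (hard_nvar d)) :
  (4 <= d)%N -> SPS_formal_degree C = d -> func_equiv C (hard_poly F d) ->
  (hard_nvar d ^ d <= SPS_size C ^ 16)%N.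
Proof.
move=> d4 Cd CP; apply: hard_nvar_pow_le => //.
apply: leq_trans (SPS_dotprod_poly_lower_bound CP) _.
by rewrite Cd leq_mul2r /SPS_size leq_addr orbT.
Qed.

Theorem theorem1p6 (F : fieldType) :
  exists (nv : nat -> nat) (P : forall d : nat, {mpoly F[nv d]}),
    [/\ poly_bounded nv,
        (forall d : nat, (d <= nv d)%N),
        VNP_family P,
        (forall d : nat, mdegree (P d) = d)
      & exists (a b d0 : nat), [/\ (0 < a)%N, (0 < b)%N &
          forall d : nat, (d0 <= d)%N ->
          forall C : SPS F (nv d),
            SPS_formal_degree C = d ->
            func_equiv C (P d) ->
            (nv d ^ (a * d) <= SPS_size C ^ b)%N]].
Proof.
have nvE d : hard_nvar d = (2 * (d./2 * (16 * d.+1))).+1.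
  by rewrite /hard_nvar nvarE addnn mul2n.
exists hard_nvar, (hard_poly F); split.
- apply: (@poly_bounded_quadratic 64) => d; rewrite nvE.
  have := odd_add_mul2_half d; nia.
- by move=> d; rewrite nvE; have := odd_add_mul2_half d; nia.
- exact: VNP_hard_poly.
- exact: mdegree_hard_poly.
- exists 1%N, 16%N, 4%N; split => // d d4 C Cd CP.
  by rewrite mul1n; exact: hard_poly_SPS_lower_bound.
Qed.
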